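(* Let $G=(V,E)$ be a graph of order $n$ such that $\frac{n}{2}<\tau(G)=\tau=n-k$, and let $W$ be its $\tau$-set. If $G[W]\cong K_\tau$, then $\beta_p(G)\le n-\frac{k}{2}$.
   Context: All graphs are finite, simple, undirected and connected. Two vertices $u,v$ are twins if $N(u)\setminus\{v\}=N(v)\setminus\{u\}$; twin classes are the equivalence classes of this relation, and the twin number $\tau(G)$ is the maximum cardinality of a twin class. A $\tau$-set is a set of pairwise twin vertices of cardinality $\tau(G)$. For a partition $\Pi=\{S_1,\dots,S_k\}$ of $V(G)$, $r(u|\Pi)=(d(u,S_1),\dots,d(u,S_k))$ with $d(u,S)=\min_{w\in S}d(u,w)$; $\Pi$ is locating if $r(u|\Pi)\ne r(v|\Pi)$ for all distinct $u,v$; $\beta_p(G)$ is the minimum size of a locating partition. *)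

From mathcomp Require Import all_boot all_order.
Set Implicit Arguments. Unset Strict Implicit. Unset Printing Implicit Defensive.

Section Graph.
Variables (T : finType) (e : rel T).

Definition simple_graph := symmetric e /\ irreflexive e.
Definition connected_graph := forall u v : T, connect e u v.

Definition nbhd (u : T) : {set T} := [set w | e u w].

Fixpoint ball (k : nat) (u : T) : {set T} :=
  match k with
  | 0 => [set u]
  | k'.+1 => ball k' u :|: [set y | [exists x in ball k' u, e x y]]
  end.

(* graph distance: least k with v in ball k u (for connected graphs this is
   < #|T|; the fallback value #|T| is never reached then) *)
Definition dist (u v : T) : nat := find (fun k => v \in ball k u) (iota 0 #|T|).

Definition dist_set (u : T) (S : {set T}) : nat :=
  \big[minn/#|T|]_(w in S) dist u w.

Definition twin (u v : T) : bool := (nbhd u :\ v) == (nbhd v :\ u).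

Definition twin_class (u : T) : {set T} := [set v | twin u v].

Definition tau : nat := \max_(u : T) #|twin_class u|.

Definition tau_set (W : {set T}) : bool :=
  [forall x in W, forall y in W, twin x y] && (#|W| == tau).

Definition is_clique (W : {set T}) : bool :=
  [forall x in W, forall y in W, (x != y) ==> e x y].

(* locating partition: a partition of V such that distinct vertices have
   distinct distance vectors (r(u|P) <> r(v|P) iff some class separates) *)
Definition locating_partition (P : {set {set T}}) : bool :=
  partition P [set: T] &&
  [forall u, forall v, (u != v) ==> [exists S in P, dist_set u S != dist_set v S]].

Definition beta_p : nat :=
  \big[minn/#|T|]_(P : {set {set T}} | locating_partition P) #|P|.

End Graph.

From mathcomp Require Import all_boot all_order.
From mathcomp Require Import zify.
Set Implicit Arguments. Unset Strict Implicit. Unset Printing Implicit Defensive.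
Import Order.TTheory.

(* The vertices of the clique W have a common neighbourhood outside W, and by
   maximality of the twin class no outside vertex is their twin.  Hence every
   outside vertex x adjacent to W has an outside vertex y adjacent to exactly
   one of x and the vertices of W.  These pairs form a graph without isolated
   vertices, so (Ore) a set Y of at most k/2 outside vertices dominates all the
   outside vertices adjacent to W.  Pair each of the k - |Y| <= k < tau other
   outside vertices with its own vertex of W other than a fixed w0, and
   make every remaining vertex a singleton class: this gives at most
   tau + k/2 = n - k/2 classes.  Vertices in different classes are told apart
   by the class of one of them; a pair {w, x} is told apart by the singleton
   {w0} if x is not adjacent to W, and by the singleton {y} of a vertex y of Y
   adjacent to exactly one of w and x otherwise. *)

Section Domination.
Variables (T : finType) (H : rel T).

Definition dominates (A Y : {set T}) := [forall x in A :\: Y, [exists y in Y, H x y]].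

Lemma dominatesP (A Y : {set T}) :
  reflect (forall x, x \in A -> x \notin Y -> exists2 y, y \in Y & H x y)
          (dominates A Y).
Proof.
apply: (iffP forall_inP) => [domY x xA xY | domY x].
  by move: (domY x); rewrite !inE xA xY => /(_ isT) /exists_inP.
by rewrite inE => /andP [xY xA]; apply/exists_inP; apply: domY.
Qed.

Hypotheses (H_sym : symmetric H) (H_irr : irreflexive H).
Variables (X A : {set T}).
Hypotheses (sAX : A \subset X) (A_nonisolated : {in A, forall x, exists2 y, y \in X & H x y}).

Lemma dominates_setD_minimal (Y : {set T}) :
  dominates A Y -> {in Y, forall y, ~~ dominates A (Y :\ y)} ->
  dominates A (X :\: Y).
Proof.
move=> /dominatesP domY minY; apply/dominatesP => x xA.
rewrite inE (subsetP sAX _ xA) andbT negbK => xY.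
apply/exists_inP; apply: contraNT (minY x xY) => /exists_inPn noXY.
apply/dominatesP => z zA zYx.
have [->|zx] := eqVneq z x.
  have [y yX Hxy] := A_nonisolated xA.
  have yY : y \in Y by apply: contraTT Hxy => yY; apply: noXY; rewrite inE yY yX.
  by exists y => //; rewrite !inE yY andbT; apply: contraTneq Hxy => ->; rewrite H_irr.
have zY : z \notin Y by move: zYx; rewrite !inE zx.
have [y yY Hzy] := domY z zA zY.
exists y => //; rewrite !inE yY andbT; apply: contraTneq Hzy => ->.
by rewrite H_sym; apply: noXY; rewrite inE zY (subsetP sAX).
Qed.

Lemma half_dominating_set :
  exists Y : {set T}, [/\ Y \subset X, 2 * #|Y| <= #|X| & dominates A Y].
Proof.
have exn : exists n, [exists Y : {set T}, [&& Y \subset X, dominates A Y & #|Y| == n]].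
  exists #|X|; apply/existsP; exists X; rewrite subxx eqxx andbT /=.
  by apply/dominatesP => x /(subsetP sAX) ->.
case: (ex_minnP exn) => n /existsP [Y /and3P [sYX domY /eqP cY]] minY.
have cardY (Y' : {set T}) : Y' \subset X -> dominates A Y' -> #|Y| <= #|Y'|.
  by move=> sY'X domY'; rewrite cY; apply: minY; apply/existsP; exists Y'; rewrite sY'X domY' eqxx.
exists Y; split => //.
have : #|Y| <= #|X :\: Y|.
  apply: (cardY); first exact: subsetDl.
  apply: dominates_setD_minimal => // y yY; apply: contraTN isT => domYy.
  have := cardY _ (subset_trans (subD1set Y y) sYX) domYy.
  by rewrite (cardsD1 y Y) yY ltnn.
have := subset_leq_card sYX; rewrite cardsD (setIidPr sYX); lia.
Qed.

End Domination.

Lemma exists_injection_in (T1 T2 : finType) (A : {set T1}) (B : {set T2}) (b0 : T2) :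
  #|A| <= #|B| -> exists2 g : T1 -> T2, {in A &, injective g} & {in A, forall a, g a \in B}.
Proof.
move=> leAB; pose g a := nth b0 (enum B) (index a (enum A)).
have idx_lt a : a \in A -> index a (enum A) < size (enum B).
  by move=> aA; rewrite -cardE (leq_trans _ leAB) // cardE index_mem mem_enum.
exists g => [a1 a2 a1A a2A /eqP | a aA]; last by rewrite -mem_enum mem_nth ?idx_lt.
rewrite nth_uniq ?enum_uniq ?idx_lt // => /eqP eq_idx.
by rewrite -[a1](nth_index a1 (s := enum A)) ?mem_enum // eq_idx nth_index ?mem_enum.
Qed.

Section Graph.
Variables (T : finType) (e : rel T).

Lemma dist_eq0 u v : (dist e u v == 0) = (u == v).
Proof.
rewrite /dist; have : 0 < #|T| by apply/card_gt0P; exists u.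
by case: #|T| => // n _ /=; rewrite !inE [v == u]eq_sym; case: (u == v).
Qed.

Lemma dist_eq1 u v : (dist e u v == 1) = (u != v) && e u v.
Proof.
have [<-|uv] := eqVneq u v; first by rewrite (eqP (etrans (dist_eq0 u u) (eqxx u))).
rewrite /dist; have : 1 < #|T| by apply/card_gt1P; exists u, v.
case: #|T| => [|[|n]] //= _; rewrite !inE [v == u]eq_sym (negbTE uv) /=.
case: existsP => [[x /andP [/set1P -> ->]] //|no_e].
by apply/esym/negP => uv_e; apply: no_e; exists u; rewrite inE eqxx.
Qed.

Lemma dist_le u v : dist e u v <= #|T|.
Proof. by rewrite /dist -[X in _ <= X](size_iota 0) find_size. Qed.

Lemma dist_set1 u y : dist_set e u [set y] = dist e u y.
Proof. by rewrite /dist_set big_set1E; apply/minn_idPl/dist_le. Qed.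

Lemma dist_set_eq0 u (S : {set T}) : (dist_set e u S == 0) = (u \in S).
Proof.
apply/idP/idP => [|uS]; last first.
  rewrite -leqn0 -(eqP (etrans (dist_eq0 u u) (eqxx u))).
  by rewrite /dist_set -minEnat; exact: (bigmin_le_cond _ (dist e u) uS).
apply: contraLR; rewrite -lt0n => uS.
apply: (big_ind (fun m => 0 < m)) => [|a b a0 b0|w wS]; first by apply/card_gt0P; exists u.
  by rewrite leq_min a0.
by rewrite lt0n dist_eq0; apply: contraNneq uS => ->.
Qed.

Lemma twin_adj u v x : twin e u v -> x != u -> x != v -> e u x = e v x.
Proof. by move=> /eqP /setP /(_ x); rewrite !inE => + xu xv; rewrite xu xv. Qed.

Lemma tau_set_twin_closed (W : {set T}) w x :
  tau_set e W -> w \in W -> twin e w x -> x \in W.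
Proof.
case/andP=> /forall_inP twW /eqP cardW wW twx; apply: contraT => xW.
have : #|x |: W| <= tau e.
  apply: leq_trans (leq_bigmax w); apply/subset_leq_card/subsetP => z.
  rewrite !inE => /predU1P [-> //|zW].
  by move/forall_inP: (twW w wW); apply.
by rewrite cardsU1 xW cardW ltnn.
Qed.

Lemma locating_partition_sep (P : {set {set T}}) :
  partition P [set: T] ->
  (forall u v, u != v -> v \in pblock P u ->
     exists2 S, S \in P & dist_set e u S != dist_set e v S) ->
  locating_partition e P.
Proof.
move=> partP sepP; apply/andP; split=> //.
apply/forallP => u; apply/forallP => v; apply/implyP => uv; apply/exists_inP.
have [/eqP coverP _ _] := and3P partP.
have uP : u \in cover P by rewrite coverP.
case: (boolP (v \in pblock P u)) => [|vu]; first exact: sepP.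
exists (pblock P u); first exact: pblock_mem.
have /eqP -> : dist_set e u (pblock P u) == 0 by rewrite dist_set_eq0 mem_pblock.
by rewrite eq_sym dist_set_eq0.
Qed.

Lemma beta_p_le (P : {set {set T}}) : locating_partition e P -> beta_p e <= #|P|.
Proof.
move=> locP; rewrite /beta_p -minEnat.
by have := bigmin_le_cond #|T| (fun Q : {set {set T}} => #|Q|) locP; apply.
Qed.

Section PreimPartition.
Variables (rT : finType) (f : T -> rT).

Lemma card_preim_partition (D : {set T}) : #|preim_partition f D| <= #|f @: D|.
Proof.
have -> : preim_partition f D = (fun l => [set y in D | l == f y]) @: (f @: D).
  by rewrite -imset_comp.
exact: leq_imset_card.
Qed.

Lemma set1_preim_partition y :
  (forall z, f z = f y -> z = y) -> [set y] \in preim_partition f [set: T].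
Proof.
move=> fiber_y; apply/imsetP; exists y => //; apply/setP => z.
by rewrite !inE; apply/eqP/eqP => [<-|/esym/fiber_y].
Qed.

Lemma locating_preim_partition :
  (forall u v, u != v -> f u = f v ->
     exists2 y, (forall z, f z = f y -> z = y) & dist e u y != dist e v y) ->
  locating_partition e (preim_partition f [set: T]).
Proof.
move=> sep_f; apply: locating_partition_sep; first exact: preim_partitionP.
move=> u v uv; rewrite pblock_equivalence_partition ?inE //; last first.
  by split=> // /eqP ->.
move=> /eqP /(sep_f u v uv) [y fiber_y uvy].
by exists [set y]; rewrite ?set1_preim_partition // !dist_set1.
Qed.

End PreimPartition.
End Graph.

Section TwinClique.
Variables (T : finType) (e : rel T) (W : {set T}) (w0 : T).
Hypotheses (e_sym : symmetric e) (e_irr : irreflexive e).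
Hypotheses (tauW : tau_set e W) (cliqueW : is_clique e W) (w0W : w0 \in W).

Lemma adj_tau_set w x : w \in W -> x \notin W -> e w x = e w0 x.
Proof.
move=> wW xW; case/andP: tauW => /forall_inP /(_ w wW) /forall_inP /(_ w0 w0W) twin_w _.
by apply: twin_adj twin_w _ _; apply: contraNneq xW => ->.
Qed.

(* For [x] adjacent to [w0], [breaks x y] says that [y] is adjacent to exactly
   one of [x] and [w0]; writing [e w0 x && e w0 y] rather than [e w0 y] makes
   the relation symmetric. *)
Definition breaks x y := (x != y) && (e x y != e w0 x && e w0 y).

Lemma breaks_sym : symmetric breaks.
Proof. by move=> x y; rewrite /breaks [x == y]eq_sym e_sym [e w0 x && _]andbC. Qed.

Lemma breaks_irr : irreflexive breaks.
Proof. by move=> x; rewrite /breaks eqxx. Qed.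

Lemma breaks_nonisolated :
  {in [set x in ~: W | e w0 x], forall x, exists2 y, y \in ~: W & breaks x y}.
Proof.
move=> x; rewrite !inE => /andP [xW w0x].
apply/exists_inP; apply: contraT => /exists_inPn no_breaker.
suff /(tau_set_twin_closed tauW w0W) : twin e w0 x by rewrite (negbTE xW).
apply/eqP/setP => z; rewrite !inE.
have [zW|zW] := boolP (z \in W).
  have -> : z != x by apply: contraNneq xW => <-.
  rewrite [e x z]e_sym (adj_tau_set zW xW) w0x andbT.
  have [-> | zw0] := eqVneq z w0; first by rewrite e_irr.
  move/forall_inP: cliqueW => /(_ w0 w0W) /forall_inP /(_ z zW) /implyP.
  by rewrite eq_sym zw0 => ->.
have -> : z != w0 by apply: contraNneq zW => ->.
have [-> | zx] := eqVneq z x; first by rewrite e_irr.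
by have := no_breaker z; rewrite inE zW /breaks eq_sym zx w0x negbK => /(_ isT) /eqP ->.
Qed.

Section Pairing.
Variables (Y : {set T}) (g : T -> T).
Local Notation Z := (~: W :\: Y).
Hypotheses (sYW : Y \subset ~: W) (domY : dominates breaks [set x in ~: W | e w0 x] Y).
Hypotheses (g_inj : {in Z &, injective g}) (gZ : {in Z, forall x, g x \in W :\ w0}).

Definition pair_up v := if v \in Z then g v else v.

Lemma pair_up_singleton v : v \notin Z -> v \notin W :\ w0 ->
  forall z, pair_up z = pair_up v -> z = v.
Proof.
rewrite /pair_up => vZ vW z; rewrite (negbTE vZ).
by case: ifP => // zZ gzv; move: vW; rewrite -gzv gZ.
Qed.

Lemma pair_up_eq u v : u != v -> pair_up u = pair_up v ->
  (u \in Z) && (g u == v) || (v \in Z) && (g v == u).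
Proof.
rewrite /pair_up => uv; case: ifP => uZ; case: ifP => vZ.
- by move/(g_inj uZ vZ)/eqP; rewrite (negbTE uv).
- by move=> <-; rewrite eqxx.
- by move=> ->; rewrite eqxx orbT.
- by move/eqP; rewrite (negbTE uv).
Qed.

Lemma partner_separated x : x \in Z ->
  exists2 y, (forall z, pair_up z = pair_up y -> z = y) & dist e (g x) y != dist e x y.
Proof.
move=> xZ; have := gZ xZ; rewrite !inE => /andP [gx_w0 gxW].
have [xW xY] : x \notin W /\ x \notin Y by move: xZ; rewrite !inE andbC => /andP [].
suff [y fiber_y sep_y] : exists2 y, (forall z, pair_up z = pair_up y -> z = y) &
    (g x != y) && e (g x) y != (x != y) && e x y.
  by exists y => //; apply: contraNneq sep_y => eq_dist; rewrite -!dist_eq1 eq_dist.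
have [w0x | w0x] := boolP (e w0 x).
  have [y yY breaks_xy] : exists2 y, y \in Y & breaks x y.
    by apply: (elimT (dominatesP _ _ _) domY); rewrite ?inE ?xW.
  have yW : y \notin W by move/subsetP: sYW => /(_ y yY); rewrite inE.
  exists y.
    by apply: pair_up_singleton; rewrite !inE ?yY ?(negbTE yW) ?andbF.
  move: breaks_xy; rewrite /breaks w0x (adj_tau_set gxW yW) => /andP [-> ].
  have -> : g x != y by apply: contraNneq yW => <-.
  by rewrite /= eq_sym.
exists w0.
  by apply: pair_up_singleton; rewrite !inE ?w0W ?eqxx ?andbF.
have -> : x != w0 by apply: contraNneq xW => ->.
move/forall_inP: cliqueW => /(_ _ gxW) /forall_inP /(_ w0 w0W) /implyP /(_ gx_w0) ->.
by rewrite gx_w0 e_sym (negbTE w0x).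
Qed.

Lemma locating_pair_up : locating_partition e (preim_partition pair_up [set: T]).
Proof.
apply: locating_preim_partition => u v uv /(pair_up_eq uv).
case/orP => /andP [xZ /eqP <-]; have [y fiber_y sep_y] := partner_separated xZ.
  by exists y; rewrite // eq_sym.
by exists y.
Qed.

Lemma card_pair_up : #|preim_partition pair_up [set: T]| <= #|W| + #|Y|.
Proof.
apply: leq_trans (card_preim_partition _ _) _.
apply: leq_trans (subset_leq_card (_ : _ \subset W :|: Y)) _; last first.
  by rewrite cardsU leq_subr.
apply/subsetP => _ /imsetP [v _ ->]; rewrite /pair_up inE.
case: ifP => [/gZ | ]; first by rewrite inE => /andP [_ ->].
by rewrite !inE => /negbT; rewrite negb_and !negbK orbC.
Qed.

End Pairing.
End TwinClique.

Theorem theorem16 (T : finType) (e : rel T) (W : {set T}) :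
  simple_graph e -> connected_graph e ->
  (#|T| < 2 * tau e)%N ->
  tau_set e W -> is_clique e W ->
  (2 * beta_p e <= 2 * #|T| - (#|T| - tau e))%N.
Proof.
(* Only distances 0 and 1 are ever compared. *)
move=> [e_sym e_irr] _ n_lt_2tau tauW cliqueW.
have cardW : #|W| = tau e by case/andP: tauW => _ /eqP.
have [w0 w0W] : exists w0, w0 \in W by apply/card_gt0P; rewrite cardW; lia.
have sAW : [set x in ~: W | e w0 x] \subset ~: W by rewrite setIdE subsetIl.
have [Y [sYW cardY domY]] := half_dominating_set (breaks_sym w0 e_sym)
  (breaks_irr e w0) sAW (breaks_nonisolated e_sym e_irr tauW cliqueW w0W).
have cardWc := cardsC W.
have cardZ : #|~: W :\: Y| <= #|W :\ w0|.
  by have := subset_leq_card (subsetDl (~: W) Y); have := cardsD1 w0 W; rewrite w0W; lia.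
have [g g_inj gZ] := exists_injection_in w0 cardZ.
have := leq_trans (beta_p_le (locating_pair_up e_sym tauW cliqueW w0W sYW domY g_inj gZ))
  (card_pair_up gZ).
lia.
Qed.
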